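(* Let $0<q<1$, let $\mu,\nu\in\mathbb{R}$ and $\alpha,\beta\in\mathbb{C}$. Let $V$ be the vector space of formal (possibly infinite) linear combinations $\sum_{m\ge 0} c_m \xi_m$ of symbols $\xi_0,\xi_1,\xi_2,\dots$, and define linear operators $A_\pm$ on $V$ (acting termwise) by $$A_+\xi_n=-q^{-(n+1)/2}\,\xi_{n+1},\qquad A_-\xi_n=q^{n/2+1}\,\frac{1-q^{-n}}{1-q}\,\xi_{n-1}$$ (so $A_-\xi_0=0$). Let $$U^{(\mu,\nu)}(\alpha,\beta)=E_q^{(\mu)}\big((1-q)\alpha A_+\big)\,E_q^{(\nu)}\Big(\frac{\beta}{q}(1-q)A_-\Big),\qquad E_q^{(\mu)}(X)=\sum_{k=0}^\infty\frac{q^{\mu k^2}}{(q;q)_k}X^k .$$ Then for every $n\ge 0$ one has $U^{(\mu,\nu)}(\alpha,\beta)\,\xi_n=\sum_{m=0}^\infty U^{(\mu,\nu)}_{m,n}(\alpha,\beta)\,\xi_m$ with $$U^{(\mu,\nu)}_{m,n}(\alpha,\beta)=(-\beta)^{n-m}q^{(n-m)[(\nu+1/4)(n-m)-n/2-1/4]}\begin{bmatrix} n\\ m\end{bmatrix}_q\,\mathcal{P}_m^{(\mu,\nu)}\big(-(1-q)\alpha\beta;q^{n-m}\,\big|\,q\big)\quad\text{if } m\le n,$$ $$U^{(\mu,\nu)}_{m,n}(\alpha,\beta)=\frac{[-(1-q)\alpha]^{m-n}}{(q;q)_{m-n}}\,q^{(m-n)[(\mu-1/4)(m-n)-n/2-1/4]}\,\mathcal{P}_n^{(\nu,\mu)}\big(-(1-q)\alpha\beta;q^{m-n}\,\big|\,q\big)\quad\text{if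 } m\ge n .$$
   Context: $(a;q)_0=1$, $(a;q)_k=\prod_{j=0}^{k-1}(1-aq^j)$; $\begin{bmatrix} n\\ k\end{bmatrix}_q=\frac{(q;q)_n}{(q;q)_k(q;q)_{n-k}}$. For a nonnegative integer $\gamma$ and real $\mu,\nu$, the polynomial $\mathcal{P}_n^{(\mu,\nu)}$ is $$\mathcal{P}_n^{(\mu,\nu)}(x;q^\gamma|q)=\sum_{k=0}^n\frac{q^{k^2(\mu+\nu)+2\nu\gamma k}\,(q^{-n};q)_k}{(q;q)_k\,(q^{\gamma+1};q)_k}\,x^k .$$ Applying $U^{(\mu,\nu)}(\alpha,\beta)$ to $\xi_n$: the $A_-$ factor produces a finite combination, and the $A_+$ factor then produces a formal series in $V$ each of whose coefficients is a finite sum. The operators $A_\pm$ (together with $K\xi_n=q^{-n/2}\xi_n$) give a representation of the $q$-oscillator algebra $A_-A_+-q^{-1}A_+A_-=1$. *)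

From Stdlib Require Import Reals.
From Coquelicot Require Import Coquelicot.
Open Scope R_scope.

(* Formal (possibly infinite) combinations sum_m c_m xi_m, as coefficient
   sequences m |-> c_m. *)
Definition vec := nat -> C.

Definition xi (n : nat) : vec := fun m => if Nat.eqb m n then RtoC 1 else RtoC 0.

(* A_+ xi_n = - q^{-(n+1)/2} xi_{n+1}, extended termwise *)
Definition Aplus (q : R) (v : vec) : vec := fun m =>
  match m with
  | O => RtoC 0
  | S m' => Cmult (RtoC (- Rpower q (- (INR m' + 1) / 2))) (v m')
  end.

(* A_- xi_n = q^{n/2+1} (1 - q^{-n})/(1-q) xi_{n-1}  (A_- xi_0 = 0), termwise *)
Definition Aminus (q : R) (v : vec) : vec := fun m =>
  Cmult (RtoC (Rpower q (INR (S m) / 2 + 1) * (1 - Rpower q (- INR (S m))) / (1 - q)))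
        (v (S m)).

Fixpoint qpoch (a q : R) (k : nat) : R :=
  match k with
  | O => 1
  | S k' => qpoch a q k' * (1 - a * q ^ k')
  end.

Definition qbinom (q : R) (n k : nat) : R :=
  qpoch q q n / (qpoch q q k * qpoch q q (n - k)).

Definition Ecoef (mu q : R) (k : nat) : R := Rpower q (mu * INR k ^ 2) / qpoch q q k.

(* Coefficient of xi_m in U^{(mu,nu)}(alpha,beta) xi_n, where
   U = E_q^{(mu)}((1-q) alpha A_+) E_q^{(nu)}((beta/q)(1-q) A_-).
   The k-sum (A_- part) is truncated at n since A_-^k xi_n = 0 for k > n;
   the j-sum (A_+ part) is truncated at m since A_+^j raises the minimal
   index of the support by j, so terms with j > m have zero m-th coefficient.
   Hence this is exactly the (finite) m-th coefficient of the formal series. *)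
Definition Ucoef (q mu nu : R) (alpha beta : C) (m n : nat) : C :=
  sum_n (fun j =>
    sum_n (fun k =>
      Cmult (Cmult (Cmult (RtoC (Ecoef mu q j)) (pow_n (Cmult (RtoC (1 - q)) alpha) j))
                   (Cmult (RtoC (Ecoef nu q k))
                          (pow_n (Cmult (Cdiv beta (RtoC q)) (RtoC (1 - q))) k)))
            (Nat.iter j (Aplus q) (Nat.iter k (Aminus q) (xi n)) m)) n) m.

Definition Pcal (mu nu q : R) (gamma n : nat) (x : C) : C :=
  sum_n (fun k =>
    Cmult (RtoC (Rpower q (INR k ^ 2 * (mu + nu) + 2 * nu * INR gamma * INR k)
                 * qpoch (Rpower q (- INR n)) q k
                 / (qpoch q q k * qpoch (q ^ (gamma + 1)) q k)))
          (pow_n x k)) n.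

(* A_-^k lowers xi_(r+k) to a multiple of xi_r and A_+^j raises xi_r to a
   multiple of xi_(r+j), with explicit coefficients made of powers of q and
   q-Pochhammer symbols.  So in U xi_n the coefficient of xi_m gets, for each
   power j of A_+, a single contribution, namely from k = n + j - m.  Indexed by
   i = min(j, k), the surviving terms are, up to the prefactor of the claimed
   formula, the terms of P_m^(mu,nu) (if m <= n) or P_n^(nu,mu) (if m >= n);
   the comparison rests on
     (q^-N; q)_i (q; q)_(N-i) = (-1)^i q^(i(i-1)/2 - iN) (q; q)_N   and
     (q; q)_d (q^(d+1); q)_i = (q; q)_(d+i). *)

From Stdlib Require Import Reals Lia Lra.
From Coquelicot Require Import Coquelicot.
Open Scope R_scope.

Lemma sum_n_vanishing {G : AbelianMonoid} (g : nat -> G) N :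
  (forall j, (j <= N)%nat -> g j = zero) -> sum_n g N = zero.
Proof.
  intros Hg. rewrite (sum_n_ext_loc g (fun _ => zero)) by exact Hg.
  apply sum_n_m_const_zero.
Qed.

Lemma sum_n_delta {G : AbelianMonoid} (g : nat -> G) K N :
  sum_n (fun k => if Nat.eqb k K then g k else zero) N =
  if Nat.leb K N then g K else zero.
Proof.
  induction N as [|N IH].
  - rewrite sum_O. destruct K; reflexivity.
  - rewrite sum_Sn, IH.
    destruct (Nat.eqb_spec (S N) K), (Nat.leb_spec K N), (Nat.leb_spec K (S N));
      subst; try lia.
    + apply plus_zero_l.
    + apply plus_zero_r.
    + apply plus_zero_r.
Qed.

Lemma sum_n_shift_vanishing {G : AbelianMonoid} (g : nat -> G) e N :
  (forall j, (j < e)%nat -> g j = zero) ->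
  sum_n g (e + N) = sum_n (fun i => g (e + i)%nat) N.
Proof.
  intros Hg. induction N as [|N IH].
  - rewrite sum_O, Nat.add_0_r. destruct e as [|e].
    + apply sum_O.
    + rewrite sum_Sn, sum_n_vanishing by (intros; apply Hg; lia).
      apply plus_zero_l.
  - rewrite Nat.add_succ_r, !sum_Sn, IH, Nat.add_succ_r. reflexivity.
Qed.

Lemma Cmult_sum_n (c : C) (u : nat -> C) N :
  Cmult c (sum_n u N) = sum_n (fun k => Cmult c (u k)) N.
Proof. symmetry. exact (sum_n_mult_l c u N). Qed.

Lemma Cpow_opp (z : C) n : Cpow (Copp z) n = Cmult (RtoC ((-1) ^ n)) (Cpow z n).
Proof.
  rewrite RtoC_pow, <- Cpow_mult_l. f_equal.
  unfold RtoC; simpl. apply injective_projections; simpl; ring.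
Qed.

Lemma one_sub_Rpower_opp q x :
  1 - Rpower q (- x) = - Rpower q (- x) * (1 - Rpower q x).
Proof.
  rewrite Rpower_Ropp. field. apply Rgt_not_eq, exp_pos.
Qed.

(* Moves every factor [Rpower q _] of a right-nested product to the front and
   merges them, so that [field] is left with a single exponent to compare. *)
Ltac collect_Rpower q :=
  repeat match goal with
  | |- context [Rpower q ?a * (Rpower q ?b * ?y)] =>
      rewrite <- (Rmult_assoc (Rpower q a)), <- (Rpower_plus a b)
  | |- context [Rpower q ?a * Rpower q ?b] => rewrite <- (Rpower_plus a b)
  | |- context [?x * (Rpower q ?a * ?y)] =>
      lazymatch x with Rpower _ _ => fail | _ =>
        rewrite (Rmult_comm x (Rpower q a * y)), Rmult_assoc, (Rmult_comm y x) end
  | |- context [?x * Rpower q ?a] =>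
      lazymatch x with Rpower _ _ => fail | _ => rewrite (Rmult_comm x (Rpower q a)) end
  end.

Ltac Rpower_eq_by_field q :=
  unfold Rdiv; rewrite ?Rinv_mult, ?Rmult_assoc; collect_Rpower q;
  apply (f_equal2 Rmult); [f_equal; rewrite ?plus_INR, ?S_INR; field | field].

Definition Pcal_coef (mu nu q : R) (gamma n k : nat) : R :=
  Rpower q (INR k ^ 2 * (mu + nu) + 2 * nu * INR gamma * INR k)
  * qpoch (Rpower q (- INR n)) q k / (qpoch q q k * qpoch (q ^ (gamma + 1)) q k).

Lemma Pcal_sum mu nu q gamma n x :
  Pcal mu nu q gamma n x =
  sum_n (fun k => Cmult (RtoC (Pcal_coef mu nu q gamma n k)) (pow_n x k)) n.
Proof. reflexivity. Qed.

Section Oscillator.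

Variable q : R.
Hypothesis q_bounds : 0 < q < 1.

Lemma qpoch_q_pos k : 0 < qpoch q q k.
Proof.
  induction k as [|k IH]; simpl; [lra|].
  apply Rmult_lt_0_compat; [exact IH|].
  assert (q ^ S k < 1) by (apply pow_lt_1_compat; [lra|lia]).
  simpl in *. lra.
Qed.

Lemma qpoch_q_neq0 k : qpoch q q k <> 0.
Proof. apply Rgt_not_eq, qpoch_q_pos. Qed.

Lemma qpoch_q_add d i : qpoch q q d * qpoch (q ^ (d + 1)) q i = qpoch q q (d + i).
Proof.
  induction i as [|i IH].
  - rewrite Nat.add_0_r. simpl. ring.
  - rewrite (Nat.add_succ_r d i). cbn [qpoch]. rewrite <- IH, !pow_add. simpl. ring.
Qed.

Lemma qpoch_q_shift d i : qpoch (q ^ (d + 1)) q i = qpoch q q (d + i) / qpoch q q d.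
Proof.
  rewrite <- qpoch_q_add. field. apply qpoch_q_neq0.
Qed.

Lemma qpoch_Rpower_opp r i :
  qpoch (Rpower q (- INR (r + i))) q i =
  (-1) ^ i * Rpower q (INR i * (INR i - 1) / 2 - INR i * INR (r + i))
  * qpoch q q (r + i) / qpoch q q r.
Proof.
  rewrite <- (Rmult_div_l (qpoch _ q i) (qpoch q q r)) by apply qpoch_q_neq0.
  apply (f_equal (fun x => x / qpoch q q r)).
  revert r. induction i as [|i IH]; intros r.
  - rewrite Nat.add_0_r. simpl. replace (0 * (0 - 1) / 2 - 0 * INR r) with 0 by field.
    rewrite Rpower_O by lra. ring.
  - specialize (IH (S r)). rewrite Nat.add_succ_comm in IH.
    set (N := (r + S i)%nat) in *. cbn [qpoch] in *.
    assert (Hstep : Rpower q (- INR N) * q ^ i = Rpower q (- INR (S r))).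
    { rewrite <- Rpower_pow by lra. rewrite <- Rpower_plus. subst N. f_equal.
      rewrite plus_INR, !S_INR. ring. }
    rewrite Hstep, one_sub_Rpower_opp, Rpower_pow, <- tech_pow_Rmult by lra.
    transitivity (qpoch (Rpower q (- INR N)) q i * (qpoch q q r * (1 - q * q ^ r))
                  * - Rpower q (- INR (S r))); [ring|].
    rewrite IH.
    replace (INR (S i) * (INR (S i) - 1) / 2 - INR (S i) * INR N)
      with ((INR i * (INR i - 1) / 2 - INR i * INR N) + - INR (S r))
      by (subst N; rewrite plus_INR, !S_INR; field).
    rewrite Rpower_plus. simpl pow. ring.
Qed.

Definition Aplus_iter_coef (p j : nat) : R :=
  (-1) ^ j * Rpower q (- (INR j * INR p + INR j * (INR j + 1) / 2) / 2).

Definition Aminus_iter_coef (m k : nat) : R :=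
  (-1) ^ k * Rpower q (INR k - (INR k * INR m + INR k * (INR k + 1) / 2) / 2)
  * qpoch q q (m + k) / (qpoch q q m * (1 - q) ^ k).

Lemma iter_Aplus j v (p : nat) :
  Nat.iter j (Aplus q) v (p + j)%nat = Cmult (RtoC (Aplus_iter_coef p j)) (v p).
Proof.
  induction j as [|j IH].
  - unfold Aplus_iter_coef. rewrite Nat.add_0_r. simpl.
    replace (- (0 * INR p + 0 * (0 + 1) / 2) / 2) with 0 by field.
    rewrite Rpower_O by lra. rewrite Rmult_1_l. symmetry. apply Cmult_1_l.
  - rewrite Nat.add_succ_r, Nat.iter_succ. unfold Aplus at 1.
    rewrite IH, Cmult_assoc, <- RtoC_mult.
    f_equal. f_equal. unfold Aplus_iter_coef.
    replace (- (INR (S j) * INR p + INR (S j) * (INR (S j) + 1) / 2) / 2)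
      with (- (INR j * INR p + INR j * (INR j + 1) / 2) / 2 + - (INR (p + j) + 1) / 2)
      by (rewrite plus_INR, S_INR; field).
    rewrite Rpower_plus. simpl pow. ring.
Qed.

Lemma Aminus_iter_coef_succ m k :
  Rpower q (INR (S m) / 2 + 1) * (1 - Rpower q (- INR (S m))) / (1 - q)
  * Aminus_iter_coef (S m) k = Aminus_iter_coef m (S k).
Proof.
  unfold Aminus_iter_coef.
  rewrite one_sub_Rpower_opp, Rpower_pow, <- Nat.add_succ_comm by lra.
  cbn [qpoch pow].
  replace (INR (S k) - (INR (S k) * INR m + INR (S k) * (INR (S k) + 1) / 2) / 2)
    with ((INR (S m) / 2 + 1) + - INR (S m)
          + (INR k - (INR k * INR (S m) + INR k * (INR k + 1) / 2) / 2))
    by (rewrite !S_INR; field).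
  rewrite !Rpower_plus. field.
  pose proof (qpoch_q_neq0 m). pose proof (pow_nonzero (1 - q) k ltac:(lra)).
  assert (q * q ^ m < 1) by (apply (pow_lt_1_compat q (S m)); [lra|lia]).
  repeat split; try lra; assumption.
Qed.

Lemma iter_Aminus k v m :
  Nat.iter k (Aminus q) v m = Cmult (RtoC (Aminus_iter_coef m k)) (v (m + k)%nat).
Proof.
  revert m. induction k as [|k IH]; intros m.
  - unfold Aminus_iter_coef. rewrite Nat.add_0_r. simpl.
    replace (0 - (0 * INR m + 0 * (0 + 1) / 2) / 2) with 0 by field.
    rewrite Rpower_O by lra. replace (1 * 1 * qpoch q q m / (qpoch q q m * 1)) with 1.
    + symmetry. apply Cmult_1_l.
    + field. apply qpoch_q_neq0.
  - rewrite Nat.iter_succ. unfold Aminus at 1. rewrite IH, Cmult_assoc, <- RtoC_mult.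
    rewrite Aminus_iter_coef_succ, <- Nat.add_succ_comm. reflexivity.
Qed.

Lemma iter_Aplus_Aminus_xi j k n m : (j <= m)%nat ->
  Nat.iter j (Aplus q) (Nat.iter k (Aminus q) (xi n)) m =
  if Nat.eqb (m - j + k) n
  then RtoC (Aplus_iter_coef (m - j) j * Aminus_iter_coef (m - j) k) else RtoC 0.
Proof.
  intros Hj. destruct (Nat.le_exists_sub j m Hj) as [r [-> _]].
  rewrite Nat.add_sub, iter_Aplus, iter_Aminus. unfold xi.
  destruct (Nat.eqb (r + k) n); [rewrite RtoC_mult|]; ring.
Qed.

Variables mu nu : R.

Definition U_monomial_coef (alpha beta : C) (j k : nat) : C :=
  Cmult (Cmult (RtoC (Ecoef mu q j)) (pow_n (Cmult (RtoC (1 - q)) alpha) j))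
        (Cmult (RtoC (Ecoef nu q k)) (pow_n (Cmult (Cdiv beta (RtoC q)) (RtoC (1 - q))) k)).

(* The term A_+^j A_-^k of U contributes Uweight j k r * alpha^j * beta^k to
   the coefficient of xi_(r+j) in U xi_(r+k). *)
Definition Uweight (j k r : nat) : R :=
  Ecoef mu q j * (1 - q) ^ j * (Ecoef nu q k * ((1 - q) / q) ^ k)
  * (Aplus_iter_coef r j * Aminus_iter_coef r k).

Lemma U_monomial_coef_Uweight alpha beta j k r :
  Cmult (U_monomial_coef alpha beta j k) (RtoC (Aplus_iter_coef r j * Aminus_iter_coef r k))
  = Cmult (RtoC (Uweight j k r)) (Cmult (pow_n alpha j) (pow_n beta k)).
Proof.
  unfold U_monomial_coef, Uweight.
  replace (Cmult (Cdiv beta (RtoC q)) (RtoC (1 - q))) with (Cmult (RtoC ((1 - q) / q)) beta).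
  2:{ rewrite RtoC_div by lra. field. intros Hq0. apply RtoC_inj in Hq0. lra. }
  change (pow_n ?z ?n) with (Cpow z n).
  rewrite !Cpow_mult_l, <- !RtoC_pow, !RtoC_mult. ring.
Qed.

Lemma Ucoef_single_sum alpha beta m n :
  Ucoef q mu nu alpha beta m n =
  sum_n (fun j => if Nat.leb m (n + j)
                  then Cmult (RtoC (Uweight j (n + j - m) (m - j)))
                             (Cmult (pow_n alpha j) (pow_n beta (n + j - m)))
                  else RtoC 0) m.
Proof.
  apply sum_n_ext_loc. intros j Hj.
  rewrite (sum_n_ext_loc _ (fun k => if Nat.eqb k (n + j - m) then
    if Nat.leb m (n + j) then Cmult (U_monomial_coef alpha beta j k)
      (RtoC (Aplus_iter_coef (m - j) j * Aminus_iter_coef (m - j) k)) else zero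
    else zero)).
  - rewrite sum_n_delta. replace (Nat.leb (n + j - m) n) with true
      by (symmetry; apply Nat.leb_le; lia).
    destruct (Nat.leb m (n + j)); [apply U_monomial_coef_Uweight | reflexivity].
  - intros k _. rewrite iter_Aplus_Aminus_xi by exact Hj.
    fold (U_monomial_coef alpha beta j k).
    destruct (Nat.eqb_spec (m - j + k) n), (Nat.eqb_spec k (n + j - m)),
      (Nat.leb_spec m (n + j)); try lia; try reflexivity; apply Cmult_0_r.
Qed.

Lemma Uweight_closed j k r :
  Uweight j k r =
  (-1) ^ j * (-1) ^ k * (1 - q) ^ j
  * Rpower q (mu * INR j ^ 2 + nu * INR k ^ 2
              - (INR j * INR r + INR j * (INR j + 1) / 2) / 2
              - (INR k * INR r + INR k * (INR k + 1) / 2) / 2)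
  * qpoch q q (r + k) / (qpoch q q j * qpoch q q k * qpoch q q r).
Proof.
  unfold Uweight, Ecoef, Aplus_iter_coef, Aminus_iter_coef.
  replace (((1 - q) / q) ^ k) with ((1 - q) ^ k * Rpower q (- INR k))
    by (rewrite Rpower_Ropp, Rpower_pow by lra; unfold Rdiv;
        rewrite Rpow_mult_distr, pow_inv; reflexivity).
  Rpower_eq_by_field q.
  pose proof (qpoch_q_neq0 j). pose proof (qpoch_q_neq0 k). pose proof (qpoch_q_neq0 r).
  pose proof (pow_nonzero (1 - q) k ltac:(lra)).
  repeat split; assumption.
Qed.

Lemma Ucoef_below_sum alpha beta m d :
  Ucoef q mu nu alpha beta m (d + m) =
  sum_n (fun i => Cmult (RtoC (Uweight i (d + i) (m - i)))
                        (Cmult (pow_n alpha i) (pow_n beta (d + i)))) m.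
Proof.
  rewrite Ucoef_single_sum. apply sum_n_ext_loc. intros i _.
  replace (Nat.leb m (d + m + i)) with true by (symmetry; apply Nat.leb_le; lia).
  replace (d + m + i - m)%nat with (d + i)%nat by lia.
  reflexivity.
Qed.

Lemma Ucoef_above_sum alpha beta n e :
  Ucoef q mu nu alpha beta (e + n) n =
  sum_n (fun i => Cmult (RtoC (Uweight (e + i) i (n - i)))
                        (Cmult (pow_n alpha (e + i)) (pow_n beta i))) n.
Proof.
  rewrite Ucoef_single_sum, sum_n_shift_vanishing.
  - apply sum_n_ext_loc. intros i _.
    replace (Nat.leb (e + n) (n + (e + i))) with true by (symmetry; apply Nat.leb_le; lia).
    replace (n + (e + i) - (e + n))%nat with i by lia.
    replace (e + n - (e + i))%nat with (n - i)%nat by lia.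
    reflexivity.
  - intros j Hj. replace (Nat.leb (e + n) (n + j)) with false
      by (symmetry; apply Nat.leb_gt; lia).
    reflexivity.
Qed.

Lemma Uweight_below m d i : (i <= m)%nat ->
  Uweight i (d + i) (m - i) =
  (-1) ^ d * Rpower q (INR d * ((nu + 1 / 4) * INR d - INR (m + d) / 2 - 1 / 4))
  * qbinom q (m + d) m * (Pcal_coef mu nu q d m i * ((-1) ^ i * (1 - q) ^ i)).
Proof.
  intros Hi. destruct (Nat.le_exists_sub i m Hi) as [r [-> _]].
  rewrite Nat.add_sub, Uweight_closed. unfold qbinom, Pcal_coef.
  rewrite qpoch_Rpower_opp, qpoch_q_shift, pow_add.
  replace (r + i + d - (r + i))%nat with d by lia.
  replace (r + (d + i))%nat with (r + i + d)%nat by lia.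
  Rpower_eq_by_field q.
  pose proof (qpoch_q_neq0 r). pose proof (qpoch_q_neq0 i). pose proof (qpoch_q_neq0 d).
  pose proof (qpoch_q_neq0 (d + i)). pose proof (qpoch_q_neq0 (r + i)).
  repeat split; assumption.
Qed.

Lemma Uweight_above n e i : (i <= n)%nat ->
  Uweight (e + i) i (n - i) =
  (-1) ^ e * (1 - q) ^ e / qpoch q q e
  * Rpower q (INR e * ((mu - 1 / 4) * INR e - INR n / 2 - 1 / 4))
  * (Pcal_coef nu mu q e n i * ((-1) ^ i * (1 - q) ^ i)).
Proof.
  intros Hi. destruct (Nat.le_exists_sub i n Hi) as [r [-> _]].
  rewrite Nat.add_sub, Uweight_closed. unfold Pcal_coef.
  rewrite qpoch_Rpower_opp, qpoch_q_shift, !pow_add.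
  Rpower_eq_by_field q.
  pose proof (qpoch_q_neq0 r). pose proof (qpoch_q_neq0 i). pose proof (qpoch_q_neq0 e).
  pose proof (qpoch_q_neq0 (e + i)).
  repeat split; assumption.
Qed.

End Oscillator.

Theorem mainTheorem1 (q mu nu : R) (alpha beta : C) :
  0 < q < 1 ->
  forall n m : nat,
    ((m <= n)%nat ->
      Ucoef q mu nu alpha beta m n =
      Cmult (Cmult (Cmult (pow_n (Copp beta) (n - m))
                          (RtoC (Rpower q (INR (n - m) * ((nu + 1 / 4) * INR (n - m)
                                                         - INR n / 2 - 1 / 4)))))
                   (RtoC (qbinom q n m)))
            (Pcal mu nu q (n - m) m
               (Copp (Cmult (Cmult (RtoC (1 - q)) alpha) beta)))) /\
    ((n <= m)%nat ->
      Ucoef q mu nu alpha beta m n =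
      Cmult (Cmult (Cdiv (pow_n (Copp (Cmult (RtoC (1 - q)) alpha)) (m - n))
                         (RtoC (qpoch q q (m - n))))
                   (RtoC (Rpower q (INR (m - n) * ((mu - 1 / 4) * INR (m - n)
                                                  - INR n / 2 - 1 / 4)))))
            (Pcal nu mu q (m - n) n
               (Copp (Cmult (Cmult (RtoC (1 - q)) alpha) beta)))).
Proof.
  intros Hq n m. split; intros Hle.
  - destruct (Nat.le_exists_sub m n Hle) as [d [-> _]].
    rewrite Nat.add_sub, Ucoef_below_sum, Pcal_sum, Cmult_sum_n by exact Hq.
    apply sum_n_ext_loc. intros i Hi.
    rewrite (Nat.add_comm d m), Uweight_below by assumption.
    match goal with |- ?a = ?b => change (@eq C a b) end.
    change (pow_n ?z ?k) with (Cpow z k).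
    rewrite !Cpow_opp, !Cpow_mult_l, Cpow_add_r, !RtoC_mult, !RtoC_pow. ring.
  - destruct (Nat.le_exists_sub n m Hle) as [e [-> _]].
    rewrite Nat.add_sub, Ucoef_above_sum, Pcal_sum, Cmult_sum_n by exact Hq.
    apply sum_n_ext_loc. intros i Hi.
    rewrite Uweight_above by assumption.
    match goal with |- ?a = ?b => change (@eq C a b) end.
    change (pow_n ?z ?k) with (Cpow z k).
    rewrite !RtoC_mult, RtoC_div by exact (qpoch_q_neq0 q Hq e).
    rewrite !Cpow_opp, !Cpow_mult_l, Cpow_add_r, !RtoC_mult, !RtoC_pow. field.
    intros Hzero. apply RtoC_inj in Hzero. exact (qpoch_q_neq0 q Hq e Hzero).
Qed.
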